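(* There do not exist symmetric homogeneous stable means $K,M$, each possessing a symmetric asymptotic expansion, such that the first Seiffert mean $P$ is $(K,M)$-stabilizable, i.e. such that $P(s,t)=K\big(P(s,M(s,t)),P(M(s,t),t)\big)$ for all $s,t>0$. The same holds with $P$ replaced by the second Seiffert mean $T$ or by the Neuman–Sándor mean $NS$.
   Context: For $s,t>0$, $s\ne t$: $P(s,t)=\frac{t-s}{2\arcsin\frac{t-s}{t+s}}$, $T(s,t)=\frac{t-s}{2\arctan\frac{t-s}{t+s}}$, $NS(s,t)=\frac{t-s}{2\operatorname{arcsinh}\frac{t-s}{t+s}}$, each equal to $s$ when $s=t$. A bi-variate mean is $M:(0,\infty)^2\to(0,\infty)$ with $\min\le M\le\max$; symmetric, homogeneous (degree 1). $M$ is stable if $M(s,t)=M\big(M(s,M(s,t)),M(M(s,t),t)\big)$. For stable $K,M$, $N$ is $(K,M)$-stabilizable if $N(s,t)=K\big(N(s,M(s,t)),N(M(s,t),t)\big)$ for all $s,t>0$. A mean has a symmetric asymptotic expansion with coefficients $(a_n)$ if for every fixed real $t$ and $N\ge0$, $M(x-t,x+t)=\sum_{n=0}^Na_nt^{2n}x^{-2n+1}+o(x^{-2N+1})$ as $x\to\infty$. *)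

From Stdlib Require Import Reals Lra.
Open Scope R_scope.

Definition SeiffertP (s t : R) : R :=
  if Req_EM_T s t then s else (t - s) / (2 * asin ((t - s) / (t + s))).
Definition SeiffertT (s t : R) : R :=
  if Req_EM_T s t then s else (t - s) / (2 * atan ((t - s) / (t + s))).
Definition NeumanSandor (s t : R) : R :=
  if Req_EM_T s t then s else (t - s) / (2 * arcsinh ((t - s) / (t + s))).

Definition is_mean (M : R -> R -> R) : Prop :=
  forall s t, 0 < s -> 0 < t -> Rmin s t <= M s t <= Rmax s t.
Definition is_symmetric (M : R -> R -> R) : Prop :=
  forall s t, 0 < s -> 0 < t -> M s t = M t s.
Definition is_homogeneous (M : R -> R -> R) : Prop :=
  forall l s t, 0 < l -> 0 < s -> 0 < t -> M (l * s) (l * t) = l * M s t.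
Definition is_stable (M : R -> R -> R) : Prop :=
  forall s t, 0 < s -> 0 < t ->
    M s t = M (M s (M s t)) (M (M s t) t).
Definition stabilizable (N K M : R -> R -> R) : Prop :=
  forall s t, 0 < s -> 0 < t ->
    N s t = K (N s (M s t)) (N (M s t) t).

(* Symmetric asymptotic expansion with coefficients a:
   for every real t and N, M(x-t,x+t) = sum_{n=0}^N a_n t^(2n) x^(-2n+1)
   + o(x^(-2N+1)) as x -> +oo. Here x^(-2n+1) = x / x^(2n). *)
Definition asym_sum (a : nat -> R) (t x : R) (N : nat) : R :=
  sum_f_R0 (fun n => a n * t ^ (2 * n) * (x / x ^ (2 * n))) N.
Definition has_sym_asym_expansion (M : R -> R -> R) (a : nat -> R) : Prop :=
  forall (t : R) (N : nat) (eps : R), 0 < eps ->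
    exists X : R, forall x : R, X < x ->
      Rabs (M (x - t) (x + t) - asym_sum a t x N) <= eps * (x / x ^ (2 * N)).

Definition good_mean (M : R -> R -> R) : Prop :=
  is_mean M /\ is_symmetric M /\ is_homogeneous M /\ is_stable M /\
  exists a : nat -> R, has_sym_asym_expansion M a.

(** Write a homogeneous mean X through its profile  f_X(w) = X(1-w, 1+w), so that
  X(s,t) = (s+t)/2 * f_X((t-s)/(t+s)).  For a symmetric homogeneous mean with a
  symmetric asymptotic expansion with coefficients (a_n), homogeneity turns the
  expansion at x -> oo into the even Taylor expansion
      f_X(w) = 1 + a_1 w^2 + a_2 w^4 + a_3 w^6 + o(w^6)      (w -> 0).
  The relation N(s,t) = K(N(s,M(s,t)), N(M(s,t),t)) at (s,t) = (1-z,1+z) becomes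
  a functional equation between the profiles f_N, f_K, f_M.  Expanding both sides
  to order z^6 with a small calculus of truncated power series (coefficient lists
  and the relation [agree6] "equal up to o(z^6) as z -> 0+") gives three
  polynomial relations [stab_relations] between the coefficients (k), (m), (n).
  Applied to (M,M,M) and (K,K,K) (stability of M and of K) they determine m2, m3,
  k2, k3 in terms of m1, k1; applied to (K,M,N) with N one of P, T, NS, whose
  expansions follow from Taylor bounds on asin, atan, arcsinh, they become two
  polynomial equations in m1 that admit no common solution. *)

From Stdlib Require Import Reals Lra Lia List.
From Coquelicot Require Import Coquelicot.
Import ListNotations.
Open Scope R_scope.

(** ** Polynomials as coefficient lists (constant term first) *)

Fixpoint peval (l : list R) (z : R) : R :=
  match l with [] => 0 | c :: l' => c + z * peval l' z end.

Fixpoint padd (a b : list R) : list R :=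
  match a, b with
  | [], _ => b
  | _, [] => a
  | x :: a', y :: b' => (x + y) :: padd a' b'
  end.

Fixpoint pscal (c : R) (a : list R) : list R :=
  match a with [] => [] | x :: a' => (c * x) :: pscal c a' end.

Fixpoint pmul (a b : list R) : list R :=
  match a with [] => [] | x :: a' => padd (pscal x b) (0 :: pmul a' b) end.

Definition psub (a b : list R) : list R := padd a (pscal (-1) b).

Fixpoint pmirror (l : list R) : list R :=
  match l with [] => [] | c :: l' => c :: pscal (-1) (pmirror l') end.

Definition peven (c1 c2 c3 : R) : list R := [1; 0; c1; 0; c2; 0; c3].

Definition peven_comp (c1 c2 c3 : R) (l : list R) : list R :=
  let l2 := pmul l l in
  padd [1] (pmul l2 (padd [c1] (pmul l2 (padd [c2] (pscal c3 l2))))).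

Lemma peval_add a b z : peval (padd a b) z = peval a z + peval b z.
Proof.
  revert b; induction a as [|x a IH]; intros [|y b]; simpl; try ring.
  rewrite IH; ring.
Qed.

Lemma peval_scal c a z : peval (pscal c a) z = c * peval a z.
Proof. induction a as [|x a IH]; simpl; [ring|]. rewrite IH; ring. Qed.

Lemma peval_mul a b z : peval (pmul a b) z = peval a z * peval b z.
Proof.
  induction a as [|x a IH]; simpl; [ring|].
  rewrite peval_add, peval_scal; simpl; rewrite IH; ring.
Qed.

Lemma peval_sub a b z : peval (psub a b) z = peval a z - peval b z.
Proof. unfold psub; rewrite peval_add, peval_scal; ring. Qed.

Lemma peval_even c1 c2 c3 w :
  peval (peven c1 c2 c3) w = 1 + c1 * w ^ 2 + c2 * w ^ 4 + c3 * w ^ 6.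
Proof. simpl; ring. Qed.

Lemma nth_padd a b i : nth i (padd a b) 0 = nth i a 0 + nth i b 0.
Proof.
  revert b i; induction a as [|x a IH]; intros [|y b] [|i]; simpl; try ring; auto.
Qed.

Lemma nth_pscal c a i : nth i (pscal c a) 0 = c * nth i a 0.
Proof. revert i; induction a as [|x a IH]; intros [|i]; simpl; try ring; auto. Qed.

Fixpoint pabs (l : list R) : R :=
  match l with [] => 0 | c :: l' => Rabs c + pabs l' end.

Lemma pabs_ge0 l : 0 <= pabs l.
Proof. induction l; simpl; [lra|]. pose proof (Rabs_pos a); lra. Qed.

Lemma peval_bound l z : Rabs z <= 1 -> Rabs (peval l z) <= pabs l.
Proof.
  intros Hz; induction l as [|c l IH]; simpl.
  - rewrite Rabs_R0; lra.
  - eapply Rle_trans; [apply Rabs_triang|]. rewrite Rabs_mult.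
    assert (Rabs z * Rabs (peval l z) <= 1 * pabs l)
      by (apply Rmult_le_compat; auto using Rabs_pos).
    lra.
Qed.

Lemma peval_bound_unit l z : 0 < z < 1 -> Rabs (peval l z) <= pabs l.
Proof. intros Hz. apply peval_bound. rewrite Rabs_pos_eq; lra. Qed.

Lemma pow_succ_le_base u n : 0 <= u <= 1 -> u ^ S n <= u.
Proof.
  intros Hu. induction n as [|n IH]; [simpl; lra|].
  change (u ^ S (S n)) with (u * u ^ S n). pose proof (pow_le u (S n) ltac:(lra)). nra.
Qed.

Lemma peval_shift n d z : (forall i, (i < n)%nat -> nth i d 0 = 0) ->
  peval d z = z ^ n * peval (skipn n d) z.
Proof.
  revert d; induction n as [|n IH]; intros d Hd; simpl; [ring|].
  destruct d as [|c d]; simpl; [ring|].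
  pose proof (Hd 0%nat ltac:(lia)) as H0; simpl in H0. rewrite H0, (IH d); [ring|].
  intros i Hi. apply (Hd (S i)). lia.
Qed.

Definition coeq6 (a b : list R) : Prop := forall i, (i <= 6)%nat -> nth i a 0 = nth i b 0.

Ltac coeq6_tac := let i := fresh "i" in let Hi := fresh "Hi" in
  intros i Hi; do 7 (destruct i as [|i]; [cbn; field|]); exfalso; lia.

(** ** Local properties near 0+ and agreement up to o(z^6) *)

Definition near0 (P : R -> Prop) : Prop :=
  exists d, 0 < d /\ forall z, 0 < z < d -> P z.

Lemma near0_lt c : 0 < c -> near0 (fun z => z < c).
Proof. intros Hc. exists c; split; [lra|]. intros z Hz; lra. Qed.

Lemma near0_and P Q : near0 P -> near0 Q -> near0 (fun z => P z /\ Q z).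
Proof.
  intros [d1 [H1 P1]] [d2 [H2 P2]]. exists (Rmin d1 d2); split; [apply Rmin_pos; lra|].
  intros z Hz. pose proof (Rmin_l d1 d2); pose proof (Rmin_r d1 d2).
  split; [apply P1|apply P2]; lra.
Qed.

Lemma near0_mono (P Q : R -> Prop) :
  (forall z, 0 < z -> P z -> Q z) -> near0 P -> near0 Q.
Proof. intros HPQ [d [Hd HP]]. exists d; split; auto. intros z Hz. apply HPQ; [lra|auto]. Qed.

Definition agree6 (f g : R -> R) : Prop :=
  forall eps, 0 < eps -> near0 (fun z => Rabs (f z - g z) <= eps * z ^ 6).

Lemma agree6_refl f : agree6 f f.
Proof.
  intros eps He. exists 1; split; [lra|]. intros z Hz.
  unfold Rminus; rewrite Rplus_opp_r, Rabs_R0. pose proof (pow_le z 6 ltac:(lra)); nra.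
Qed.

Lemma agree6_sym f g : agree6 f g -> agree6 g f.
Proof.
  intros H eps He. generalize (H eps He). apply near0_mono.
  intros z _ E. rewrite Rabs_minus_sym; exact E.
Qed.

Lemma agree6_trans f g h : agree6 f g -> agree6 g h -> agree6 f h.
Proof.
  intros H1 H2 eps He. generalize (near0_and _ _ (H1 (eps/2) ltac:(lra)) (H2 (eps/2) ltac:(lra))).
  apply near0_mono. intros z _ [E1 E2].
  replace (f z - h z) with ((f z - g z) + (g z - h z)) by ring.
  eapply Rle_trans; [apply Rabs_triang|]. lra.
Qed.

Lemma agree6_congr f g h : near0 (fun z => f z = g z) -> agree6 g h -> agree6 f h.
Proof.
  intros E H eps He. generalize (near0_and _ _ E (H eps He)).
  apply near0_mono. intros z _ [Ez Hz]. rewrite Ez; exact Hz.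
Qed.

Lemma agree6_add f1 f2 g1 g2 :
  agree6 f1 g1 -> agree6 f2 g2 -> agree6 (fun z => f1 z + f2 z) (fun z => g1 z + g2 z).
Proof.
  intros H1 H2 eps He. generalize (near0_and _ _ (H1 (eps/2) ltac:(lra)) (H2 (eps/2) ltac:(lra))).
  apply near0_mono. intros z _ [E1 E2].
  replace (f1 z + f2 z - (g1 z + g2 z)) with ((f1 z - g1 z) + (f2 z - g2 z)) by ring.
  eapply Rle_trans; [apply Rabs_triang|]. lra.
Qed.

Lemma agree6_scal c f g : agree6 f g -> agree6 (fun z => c * f z) (fun z => c * g z).
Proof.
  intros H eps He. assert (Hc : 0 < Rabs c + 1) by (pose proof (Rabs_pos c); lra).
  generalize (H (eps / (Rabs c + 1)) ltac:(apply Rdiv_lt_0_compat; lra)).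
  apply near0_mono. intros z Hz E.
  replace (c * f z - c * g z) with (c * (f z - g z)) by ring. rewrite Rabs_mult.
  pose proof (Rabs_pos c). pose proof (Rabs_pos (f z - g z)). pose proof (pow_le z 6 ltac:(lra)).
  apply Rle_trans with ((Rabs c + 1) * (eps / (Rabs c + 1) * z ^ 6)); [nra|].
  right; field; lra.
Qed.

Lemma agree6_trunc a b : coeq6 a b -> agree6 (peval a) (peval b).
Proof.
  intros Hc eps He. set (d := psub a b).
  assert (Hd : forall i, (i < 7)%nat -> nth i d 0 = 0).
  { intros i Hi. unfold d, psub. rewrite nth_padd, nth_pscal, (Hc i ltac:(lia)). ring. }
  pose proof (pabs_ge0 (skipn 7 d)) as HB.
  pose proof (peval_bound_unit (skipn 7 d)) as HBz.
  set (B := pabs (skipn 7 d)) in *. clearbody B.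
  generalize (near0_and _ _ (near0_lt 1 ltac:(lra))
                (near0_lt (eps / (B + 1)) ltac:(apply Rdiv_lt_0_compat; lra))).
  apply near0_mono. intros z Hz [Hz1 Hz2].
  rewrite <- peval_sub. fold d. rewrite (peval_shift 7 d z Hd), Rabs_mult.
  rewrite Rabs_pos_eq by (apply pow_le; lra).
  pose proof (HBz z ltac:(lra)). pose proof (pow_le z 6 ltac:(lra)).
  assert (z * B <= eps).
  { apply Rle_trans with (eps / (B + 1) * (B + 1)); [|right; field; lra].
    apply Rle_trans with (z * (B + 1)); [nra|]. apply Rmult_le_compat_r; lra. }
  replace (z ^ 7) with (z ^ 6 * z) by ring.
  apply Rle_trans with (z ^ 6 * z * B); [apply Rmult_le_compat_l; nra|nra].
Qed.

Lemma agree6_bounded f L : agree6 f (peval L) ->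
  exists B, 0 <= B /\ near0 (fun z => Rabs (f z) <= B).
Proof.
  intros H. exists (pabs L + 1). split; [pose proof (pabs_ge0 L); lra|].
  generalize (near0_and _ _ (H 1 ltac:(lra)) (near0_lt 1 ltac:(lra))).
  apply near0_mono. intros z Hz [E Hz1].
  pose proof (peval_bound_unit L z ltac:(lra)).
  pose proof (pow_lt_1_compat z 6 ltac:(lra) ltac:(lia)).
  replace (f z) with ((f z - peval L z) + peval L z) by ring.
  eapply Rle_trans; [apply Rabs_triang|]. lra.
Qed.

Lemma agree6_mul f1 f2 L1 L2 : agree6 f1 (peval L1) -> agree6 f2 (peval L2) ->
  agree6 (fun z => f1 z * f2 z) (fun z => peval L1 z * peval L2 z).
Proof.
  intros H1 H2 eps He.
  destruct (agree6_bounded f1 L1 H1) as [B [HB Hbd]].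
  set (B2 := pabs L2). assert (HB2 : 0 <= B2) by apply pabs_ge0.
  generalize (near0_and _ _ (near0_and _ _ Hbd (near0_lt 1 ltac:(lra)))
    (near0_and _ _ (H1 (eps / (2 * (B2 + 1))) ltac:(apply Rdiv_lt_0_compat; lra))
                   (H2 (eps / (2 * (B + 1))) ltac:(apply Rdiv_lt_0_compat; lra)))).
  apply near0_mono. intros z Hz [[Ebd Hz1] [E1 E2]].
  pose proof (peval_bound_unit L2 z ltac:(lra)) as EL2. fold B2 in EL2.
  pose proof (pow_le z 6 ltac:(lra)). assert (0 <= eps / 2 * z ^ 6) by nra.
  replace (f1 z * f2 z - peval L1 z * peval L2 z) with
    (f1 z * (f2 z - peval L2 z) + (f1 z - peval L1 z) * peval L2 z) by ring.
  eapply Rle_trans; [apply Rabs_triang|]. rewrite !Rabs_mult.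
  assert (Rabs (f1 z) * Rabs (f2 z - peval L2 z) <= B * (eps / (2 * (B + 1)) * z ^ 6))
    by (apply Rmult_le_compat; auto using Rabs_pos).
  assert (Rabs (f1 z - peval L1 z) * Rabs (peval L2 z) <= eps / (2 * (B2 + 1)) * z ^ 6 * B2)
    by (apply Rmult_le_compat; auto using Rabs_pos).
  assert (B * (eps / (2 * (B + 1)) * z ^ 6) <= eps / 2 * z ^ 6).
  { replace (B * (eps / (2 * (B + 1)) * z ^ 6)) with (B / (B + 1) * (eps / 2 * z ^ 6)) by (field; lra).
    assert (B / (B + 1) <= 1) by (apply Rmult_le_reg_r with (B + 1); [lra|]; field_simplify; lra).
    nra. }
  assert (eps / (2 * (B2 + 1)) * z ^ 6 * B2 <= eps / 2 * z ^ 6).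
  { replace (eps / (2 * (B2 + 1)) * z ^ 6 * B2) with (B2 / (B2 + 1) * (eps / 2 * z ^ 6)) by (field; lra).
    assert (B2 / (B2 + 1) <= 1) by (apply Rmult_le_reg_r with (B2 + 1); [lra|]; field_simplify; lra).
    nra. }
  lra.
Qed.

Lemma agree6_addP f g L1 L2 : agree6 f (peval L1) -> agree6 g (peval L2) ->
  agree6 (fun z => f z + g z) (peval (padd L1 L2)).
Proof.
  intros H1 H2. eapply agree6_trans; [apply agree6_add; eauto|].
  eapply agree6_congr; [|apply agree6_refl]. exists 1; split; [lra|]. intros z _.
  symmetry; apply peval_add.
Qed.

Lemma agree6_scalP c f L : agree6 f (peval L) ->
  agree6 (fun z => c * f z) (peval (pscal c L)).
Proof.
  intros H. eapply agree6_trans; [apply agree6_scal; eauto|].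
  eapply agree6_congr; [|apply agree6_refl]. exists 1; split; [lra|]. intros z _.
  symmetry; apply peval_scal.
Qed.

Lemma agree6_subP f g L1 L2 : agree6 f (peval L1) -> agree6 g (peval L2) ->
  agree6 (fun z => f z - g z) (peval (psub L1 L2)).
Proof.
  intros H1 H2. eapply agree6_congr; [|apply (agree6_addP _ _ _ _ H1 (agree6_scalP (-1) _ _ H2))].
  exists 1; split; [lra|]. intros z _. ring.
Qed.

Lemma agree6_mulP f g L1 L2 : agree6 f (peval L1) -> agree6 g (peval L2) ->
  agree6 (fun z => f z * g z) (peval (pmul L1 L2)).
Proof.
  intros H1 H2. eapply agree6_trans; [apply agree6_mul; eauto|].
  eapply agree6_congr; [|apply agree6_refl]. exists 1; split; [lra|]. intros z _.
  symmetry; apply peval_mul.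
Qed.

Lemma agree6_const c : agree6 (fun _ => c) (peval [c]).
Proof. eapply agree6_congr; [|apply agree6_refl]. exists 1; split; [lra|]. intros; simpl; ring. Qed.

Lemma agree6_norm f L L' : agree6 f (peval L) -> coeq6 L L' -> agree6 f (peval L').
Proof. intros H Hc. exact (agree6_trans _ _ _ H (agree6_trunc _ _ Hc)). Qed.

Lemma agree6_lower f L : agree6 f (peval L) -> nth 0 L 0 <> 0 ->
  near0 (fun z => Rabs (nth 0 L 0) / 2 <= Rabs (f z)).
Proof.
  destruct L as [|c L]; simpl; [tauto|]. intros H Hc.
  pose proof (Rabs_pos_lt c Hc) as Hc'. pose proof (pabs_ge0 L).
  generalize (near0_and _ _ (H (Rabs c / 4) ltac:(lra))
    (near0_and _ _ (near0_lt 1 ltac:(lra))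
                   (near0_lt (Rabs c / 4 / (pabs L + 1)) ltac:(apply Rdiv_lt_0_compat; lra)))).
  apply near0_mono. intros z Hz [E [Hz1 Hz2]].
  pose proof (peval_bound_unit L z ltac:(lra)).
  pose proof (pow_lt_1_compat z 6 ltac:(lra) ltac:(lia)). pose proof (pow_le z 6 ltac:(lra)).
  assert (Rabs (z * peval L z) <= Rabs c / 4).
  { rewrite Rabs_mult, Rabs_pos_eq by lra.
    apply Rle_trans with (z * (pabs L + 1)); [nra|].
    apply Rle_trans with (Rabs c / 4 / (pabs L + 1) * (pabs L + 1)); [apply Rmult_le_compat_r; lra|].
    right; field; lra. }
  assert (Rabs (c - f z) <= Rabs c / 2).
  { replace (c - f z) with ((c + z * peval L z - f z) + - (z * peval L z)) by ring.
    eapply Rle_trans; [apply Rabs_triang|]. rewrite Rabs_Ropp, Rabs_minus_sym. nra. }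
  pose proof (Rabs_triang_inv c (c - f z)). replace (c - (c - f z)) with (f z) in * by ring.
  lra.
Qed.

Lemma agree6_div f g L1 L2 L :
  agree6 f (peval L1) -> agree6 g (peval L2) -> nth 0 L2 0 <> 0 -> coeq6 (pmul L2 L) L1 ->
  agree6 (fun z => f z / g z) (peval L).
Proof.
  intros H1 H2 H0 Hc.
  set (c := Rabs (nth 0 L2 0) / 2). assert (Hc0 : 0 < c) by (pose proof (Rabs_pos_lt _ H0); unfold c; lra).
  assert (Hres : agree6 (fun z => f z - g z * peval L z) (peval [])).
  { apply (agree6_norm _ _ _ (agree6_subP _ _ _ _ H1 (agree6_mulP _ _ _ _ H2 (agree6_refl (peval L))))).
    intros i Hi. unfold psub. rewrite nth_padd, nth_pscal, (Hc i Hi).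
    destruct i; simpl; ring. }
  intros eps He.
  generalize (near0_and _ _ (agree6_lower g L2 H2 H0) (Hres (eps * c) ltac:(nra))).
  apply near0_mono. intros z Hz [Hg E]. fold c in Hg. simpl in E. rewrite Rminus_0_r in E.
  assert (Hg0 : g z <> 0) by (intro Z; rewrite Z, Rabs_R0 in Hg; lra).
  replace (f z / g z - peval L z) with ((f z - g z * peval L z) / g z) by (field; auto).
  unfold Rdiv. rewrite Rabs_mult, Rabs_inv.
  pose proof (pow_le z 6 ltac:(lra)).
  apply Rle_trans with (eps * c * z ^ 6 * / c).
  - apply Rmult_le_compat; auto using Rabs_pos.
    + left; apply Rinv_0_lt_compat; lra.
    + apply Rinv_le_contravar; lra.
  - right; field; lra.
Qed.

Lemma near0_witness P : near0 P -> exists z, 0 < z /\ P z.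
Proof. intros [d [Hd HP]]. exists (d / 2). split; [lra|]. apply HP; lra. Qed.

Lemma agree6_zero_coeffs d : agree6 (peval d) (fun _ => 0) ->
  forall k, (k <= 6)%nat -> nth k d 0 = 0.
Proof.
  intros H k. induction k as [k IHk] using (well_founded_induction Wf_nat.lt_wf). intros Hk.
  destruct (Req_dec (nth k d 0) 0) as [E|E]; [exact E|exfalso].
  assert (Hlow : forall i, (i < k)%nat -> nth i d 0 = 0) by (intros i Hi; apply IHk; lia).
  set (q := skipn k d).
  assert (Hq0 : nth 0 q 0 = nth k d 0).
  { unfold q. clear. revert d; induction k as [|k IH]; intros [|c d]; simpl; auto. }
  assert (Hc : 0 < Rabs (nth k d 0)) by (apply Rabs_pos_lt; exact E).
  rewrite <- Hq0 in E, Hc.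
  destruct (near0_witness _ (near0_and _ _ (near0_and _ _ (near0_lt 1 ltac:(lra))
      (agree6_lower _ q (agree6_refl _) E)) (H (Rabs (nth 0 q 0) / 4) ltac:(lra))))
    as [z [Hz [[Hz1 Hlo] Hup]]].
  rewrite Rminus_0_r, (peval_shift k d z Hlow) in Hup. fold q in Hup.
  rewrite Rabs_mult, (Rabs_pos_eq (z ^ k)) in Hup by (apply pow_le; lra).
  assert (Hzk : 0 < z ^ k) by (apply pow_lt; lra).
  assert (H6k : z ^ 6 <= z ^ k).
  { replace 6%nat with (k + (6 - k))%nat by lia. rewrite pow_add.
    assert (z ^ (6 - k) <= 1).
    { destruct (Nat.eq_dec (6 - k) 0) as [E0|E0]; [rewrite E0; simpl; lra|].
      pose proof (pow_lt_1_compat z (6 - k) ltac:(lra) ltac:(lia)); lra. }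
    pose proof (pow_le z (6 - k) ltac:(lra)). nra. }
  assert (z ^ k * Rabs (peval q z) <= z ^ k * (Rabs (nth 0 q 0) / 4)) by nra.
  assert (Rabs (peval q z) <= Rabs (nth 0 q 0) / 4) by (apply Rmult_le_reg_l with (z ^ k); lra).
  lra.
Qed.

Lemma agree6_coeffs a b : agree6 (peval a) (peval b) -> coeq6 a b.
Proof.
  intros H i Hi.
  assert (Hd : agree6 (peval (psub a b)) (fun _ => 0)).
  { intros eps He. generalize (H eps He). apply near0_mono. intros z _ E.
    rewrite peval_sub, Rminus_0_r. exact E. }
  pose proof (agree6_zero_coeffs _ Hd i Hi) as Z.
  unfold psub in Z. rewrite nth_padd, nth_pscal in Z. lra.
Qed.

Lemma agree6_small W L : agree6 W (peval L) -> nth 0 L 0 = 0 ->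
  exists C, 0 <= C /\ near0 (fun z => Rabs (W z) <= C * z).
Proof.
  intros H H0. set (C := pabs (skipn 1 L) + 1). exists C.
  split; [unfold C; pose proof (pabs_ge0 (skipn 1 L)); lra|].
  generalize (near0_and _ _ (H 1 ltac:(lra)) (near0_lt 1 ltac:(lra))).
  apply near0_mono. intros z Hz [E Hz1].
  assert (HL : peval L z = z * peval (skipn 1 L) z).
  { rewrite (peval_shift 1 L z); [ring|]. intros i Hi. replace i with 0%nat by lia. exact H0. }
  pose proof (peval_bound_unit (skipn 1 L) z ltac:(lra)).
  pose proof (pow_succ_le_base z 5 ltac:(lra)).
  replace (W z) with ((W z - peval L z) + z * peval (skipn 1 L) z) by (rewrite HL; ring).
  eapply Rle_trans; [apply Rabs_triang|]. rewrite Rabs_mult, (Rabs_pos_eq z) by lra.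
  unfold C. nra.
Qed.

(** ** Even expansions at 0 *)

Definition even_expansion (f : R -> R) (c1 c2 c3 : R) : Prop :=
  forall eps, 0 < eps -> exists d, 0 < d /\ forall w, Rabs w < d ->
    Rabs (f w - peval (peven c1 c2 c3) w) <= eps * Rabs w ^ 6.

Lemma even_expansion_agree6 f c1 c2 c3 :
  even_expansion f c1 c2 c3 -> agree6 f (peval (peven c1 c2 c3)).
Proof.
  intros H eps He. destruct (H eps He) as [d [Hd P]]. exists d; split; auto.
  intros z Hz. specialize (P z ltac:(rewrite Rabs_pos_eq; lra)).
  rewrite (Rabs_pos_eq z) in P by lra. exact P.
Qed.

Lemma even_expansion_comp f c1 c2 c3 W L :
  even_expansion f c1 c2 c3 -> agree6 W (peval L) -> nth 0 L 0 = 0 ->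
  agree6 (fun z => f (W z)) (fun z => peval (peven c1 c2 c3) (W z)).
Proof.
  intros Hf HW H0.
  destruct (agree6_small W L HW H0) as [C [HC Hsmall]].
  intros eps He. assert (HC6 : 0 <= C ^ 6) by (apply pow_le; lra).
  destruct (Hf (eps / (C ^ 6 + 1)) ltac:(apply Rdiv_lt_0_compat; lra)) as [d [Hd P]].
  generalize (near0_and _ _ Hsmall (near0_lt (d / (C + 1)) ltac:(apply Rdiv_lt_0_compat; lra))).
  apply near0_mono. intros z Hz [Es Hzd].
  assert (HWd : Rabs (W z) < d).
  { eapply Rle_lt_trans; [exact Es|].
    apply Rle_lt_trans with (C * (d / (C + 1))); [apply Rmult_le_compat_l; lra|].
    apply Rlt_le_trans with ((C + 1) * (d / (C + 1))); [|right; field; lra].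
    apply Rmult_lt_compat_r; [apply Rdiv_lt_0_compat|]; lra. }
  eapply Rle_trans; [exact (P (W z) HWd)|].
  assert (Rabs (W z) ^ 6 <= C ^ 6 * z ^ 6)
    by (rewrite <- Rpow_mult_distr; apply pow_incr; split; [apply Rabs_pos|exact Es]).
  pose proof (pow_le z 6 ltac:(lra)).
  apply Rle_trans with (eps / (C ^ 6 + 1) * (C ^ 6 * z ^ 6));
    [apply Rmult_le_compat_l; [apply Rlt_le, Rdiv_lt_0_compat|]; lra|].
  replace (eps / (C ^ 6 + 1) * (C ^ 6 * z ^ 6)) with (eps * z ^ 6 * (C ^ 6 / (C ^ 6 + 1))) by (field; lra).
  assert (C ^ 6 / (C ^ 6 + 1) <= 1) by (apply Rmult_le_reg_r with (C ^ 6 + 1); [lra|]; field_simplify; lra).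
  assert (0 <= eps * z ^ 6) by nra. nra.
Qed.

Lemma agree6_comp f c1 c2 c3 W L L' :
  even_expansion f c1 c2 c3 -> agree6 W (peval L) -> nth 0 L 0 = 0 ->
  coeq6 (peven_comp c1 c2 c3 L) L' -> agree6 (fun z => f (W z)) (peval L').
Proof.
  intros Hf HW H0 Hc.
  assert (H2 : agree6 (fun z => W z * W z) (peval (pmul L L))) by (apply agree6_mulP; auto).
  pose proof (agree6_addP _ _ _ _ (agree6_const 1) (agree6_mulP _ _ _ _ H2
    (agree6_addP _ _ _ _ (agree6_const c1) (agree6_mulP _ _ _ _ H2
      (agree6_addP _ _ _ _ (agree6_const c2) (agree6_scalP c3 _ _ H2)))))) as Hhorner.
  refine (agree6_norm _ _ _ (agree6_trans _ _ _ (even_expansion_comp _ _ _ _ _ _ Hf HW H0) _) Hc).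
  eapply agree6_congr; [|exact Hhorner]. exists 1; split; [lra|]. intros z _.
  rewrite peval_even. ring.
Qed.

(** ** Profiles of means *)

Definition profile (X : R -> R -> R) (w : R) : R := X (1 - w) (1 + w).

Definition profile_repr (X : R -> R -> R) : Prop :=
  forall s t, 0 < s -> 0 < t -> X s t = (s + t) / 2 * profile X ((t - s) / (t + s)).

Lemma ratio_bounds s t : 0 < s -> 0 < t -> -1 < (t - s) / (t + s) < 1.
Proof.
  intros Hs Ht. split.
  - apply Rmult_lt_reg_r with (t + s); [lra|]. field_simplify; lra.
  - apply Rmult_lt_reg_r with (t + s); [lra|]. field_simplify; lra.
Qed.

Lemma homogeneous_profile_repr X : is_homogeneous X -> profile_repr X.
Proof.
  intros Hh s t Hs Ht. pose proof (ratio_bounds s t Hs Ht).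
  unfold profile. rewrite <- Hh by lra. f_equal; field; lra.
Qed.

Lemma profile_bounds X : is_mean X -> forall z, 0 <= z < 1 -> 1 - z <= profile X z <= 1 + z.
Proof.
  intros Hm z Hz. pose proof (Hm (1 - z) (1 + z) ltac:(lra) ltac:(lra)) as E.
  rewrite Rmin_left, Rmax_right in E by lra. exact E.
Qed.

Lemma profile_even X : is_symmetric X -> forall w, -1 < w < 1 -> profile X (- w) = profile X w.
Proof.
  intros Hs w Hw. unfold profile. replace (1 - - w) with (1 + w) by ring.
  replace (1 + - w) with (1 - w) by ring. apply Hs; lra.
Qed.

Lemma asym_leading X a : is_mean X -> has_sym_asym_expansion X a -> a 0%nat = 1.
Proof.
  intros Hm He. destruct (Req_dec (a 0%nat) 1) as [E|E]; [exact E|exfalso].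
  set (e := Rabs (a 0%nat - 1)). assert (He0 : 0 < e) by (apply Rabs_pos_lt; lra).
  destruct (He 1 0%nat (e / 2) ltac:(lra)) as [X0 P].
  set (x := Rmax (Rabs X0 + 1) (Rmax 2 (4 / e))).
  pose proof (Rmax_l (Rabs X0 + 1) (Rmax 2 (4 / e))); pose proof (Rmax_r (Rabs X0 + 1) (Rmax 2 (4 / e))).
  pose proof (Rmax_l 2 (4 / e)); pose proof (Rmax_r 2 (4 / e)); pose proof (Rle_abs X0).
  fold x in H, H0. clearbody x.
  specialize (P x ltac:(lra)). unfold asym_sum in P. simpl in P.
  replace (a 0%nat * 1 * (x / 1)) with (a 0%nat * x) in P by field.
  replace (e / 2 * (x / 1)) with (e / 2 * x) in P by field.
  pose proof (Hm (x - 1) (x + 1) ltac:(lra) ltac:(lra)) as B.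
  rewrite Rmin_left, Rmax_right in B by lra.
  assert (Rabs ((a 0%nat - 1) * x) <= e / 2 * x + 1).
  { replace ((a 0%nat - 1) * x)
      with (- (X (x - 1) (x + 1) - a 0%nat * x) + (X (x - 1) (x + 1) - x)) by ring.
    eapply Rle_trans; [apply Rabs_triang|]. rewrite Rabs_Ropp.
    assert (Rabs (X (x - 1) (x + 1) - x) <= 1) by (apply Rabs_le; lra). lra. }
  rewrite Rabs_mult, (Rabs_pos_eq x) in H4 by lra. fold e in H4.
  assert (4 <= e * x).
  { apply Rle_trans with (e * (4 / e)); [right; field; lra|]. apply Rmult_le_compat_l; lra. }
  lra.
Qed.

(** Homogeneity turns the expansion at infinity, read at x = 1/w, into a
    one-sided expansion of the profile at 0+. *)
Lemma profile_expansion_right X a : is_mean X -> is_homogeneous X -> has_sym_asym_expansion X a ->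
  forall eps, 0 < eps -> exists d, 0 < d /\ forall w, 0 <= w < d ->
    Rabs (profile X w - peval (peven (a 1%nat) (a 2%nat) (a 3%nat)) w) <= eps * w ^ 6.
Proof.
  intros Hm Hh He eps Heps. pose proof (asym_leading X a Hm He) as Ha0.
  destruct (He 1 3%nat eps Heps) as [X0 P].
  assert (HX : 0 < Rabs X0 + 1) by (pose proof (Rabs_pos X0); lra).
  exists (Rmin (1/2) (/ (Rabs X0 + 1))). split; [apply Rmin_pos; [lra|apply Rinv_0_lt_compat; lra]|].
  intros w Hw. pose proof (Rmin_l (1/2) (/ (Rabs X0 + 1))); pose proof (Rmin_r (1/2) (/ (Rabs X0 + 1))).
  rewrite peval_even. destruct (Req_dec w 0) as [Z|Z].
  - subst w. pose proof (profile_bounds X Hm 0 ltac:(lra)).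
    replace (profile X 0) with 1 by lra. simpl. rewrite Rabs_right by lra. lra.
  - set (x := / w). assert (Hx0 : 0 < x) by (apply Rinv_0_lt_compat; lra).
    assert (Hx : X0 < x).
    { pose proof (Rle_abs X0). apply Rlt_le_trans with (Rabs X0 + 1); [lra|].
      unfold x. rewrite <- (Rinv_inv (Rabs X0 + 1)). apply Rinv_le_contravar; lra. }
    specialize (P x Hx).
    pose proof (Hh x (1 - w) (1 + w) Hx0 ltac:(lra) ltac:(lra)) as Hom.
    replace (x * (1 - w)) with (x - 1) in Hom by (unfold x; field; lra).
    replace (x * (1 + w)) with (x + 1) in Hom by (unfold x; field; lra).
    rewrite Hom in P.
    replace (asym_sum a 1 x 3) with (x * (1 + a 1%nat * w ^ 2 + a 2%nat * w ^ 4 + a 3%nat * w ^ 6)) in P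
      by (unfold asym_sum, x; simpl; rewrite Ha0; field; lra).
    replace (eps * (x / x ^ (2 * 3))) with (x * (eps * w ^ 6)) in P by (unfold x; simpl; field; lra).
    rewrite <- Rmult_minus_distr_l, Rabs_mult, (Rabs_pos_eq x) in P by lra.
    apply Rmult_le_reg_l with x; auto.
Qed.

Lemma even_expansion_of_right f c1 c2 c3 :
  (forall w, -1 < w < 1 -> f (- w) = f w) ->
  (forall eps, 0 < eps -> exists d, 0 < d /\ forall w, 0 <= w < d ->
     Rabs (f w - peval (peven c1 c2 c3) w) <= eps * w ^ 6) ->
  even_expansion f c1 c2 c3.
Proof.
  intros Hev H eps Heps. destruct (H eps Heps) as [d [Hd P]].
  exists (Rmin d 1); split; [apply Rmin_pos; lra|].
  intros w Hw. pose proof (Rmin_l d 1); pose proof (Rmin_r d 1).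
  assert (Hsym : peval (peven c1 c2 c3) (- w) = peval (peven c1 c2 c3) w) by (rewrite !peval_even; ring).
  destruct (Rle_lt_dec 0 w) as [Hw0|Hw0].
  - rewrite (Rabs_pos_eq w) in * by lra. apply P; lra.
  - rewrite (Rabs_left w) in * by lra.
    replace (f w) with (f (- w)) by (apply Hev; lra). rewrite <- Hsym. apply P; lra.
Qed.

Lemma even_expansion_of_agree6 f c1 c2 c3 :
  (forall w, -1 < w < 1 -> f (- w) = f w) -> f 0 = 1 ->
  agree6 f (peval (peven c1 c2 c3)) -> even_expansion f c1 c2 c3.
Proof.
  intros Hev H0 H. apply even_expansion_of_right; [exact Hev|]. intros eps He.
  destruct (H eps He) as [d [Hd P]]. exists d; split; [exact Hd|]. intros w Hw.
  destruct (Req_dec w 0) as [Z|Z]; [|apply P; lra].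
  subst w. rewrite H0, peval_even. replace (1 - _) with 0 by ring. rewrite Rabs_R0. simpl; lra.
Qed.

Lemma good_mean_profile X : good_mean X ->
  profile_repr X /\ (forall z, 0 <= z < 1 -> 1 - z <= profile X z <= 1 + z) /\
  stabilizable X X X /\ exists c1 c2 c3, even_expansion (profile X) c1 c2 c3.
Proof.
  intros [Hm [Hs [Hh [Hst [a Ha]]]]].
  split; [apply homogeneous_profile_repr; exact Hh|]. split; [apply profile_bounds; exact Hm|].
  split; [exact Hst|].
  exists (a 1%nat), (a 2%nat), (a 3%nat). apply even_expansion_of_right.
  - apply profile_even; exact Hs.
  - apply profile_expansion_right; assumption.
Qed.

Lemma even_expansion_lower f c1 c2 c3 : even_expansion f c1 c2 c3 ->
  exists d, 0 < d /\ forall w, Rabs w < d -> 1 / 2 <= f w.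
Proof.
  intros H. destruct (H 1 ltac:(lra)) as [d [Hd P]].
  set (C := Rabs c1 + Rabs c2 + Rabs c3 + 1).
  assert (HC : 1 <= C)
    by (unfold C; pose proof (Rabs_pos c1); pose proof (Rabs_pos c2); pose proof (Rabs_pos c3); lra).
  exists (Rmin d (/ (4 * C))). split; [apply Rmin_pos; [lra|apply Rinv_0_lt_compat; lra]|].
  intros w Hw. pose proof (Rmin_l d (/ (4 * C))); pose proof (Rmin_r d (/ (4 * C))).
  specialize (P w ltac:(lra)). rewrite peval_even in P.
  set (u := Rabs w) in *. assert (Hu : 0 <= u) by apply Rabs_pos.
  assert (/ (4 * C) <= / 4) by (apply Rinv_le_contravar; lra).
  assert (Hu1 : u <= 1/4) by lra.
  assert (Hw2 : Rabs (w ^ 2) <= u) by (rewrite <- RPow_abs; apply pow_succ_le_base; lra).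
  assert (Hw4 : Rabs (w ^ 4) <= u) by (rewrite <- RPow_abs; apply pow_succ_le_base; lra).
  assert (Hw6 : u ^ 6 <= u) by (apply pow_succ_le_base; lra).
  assert (Rabs (w ^ 6) <= u) by (rewrite <- RPow_abs; exact Hw6).
  assert (Hc : Rabs (c1 * w ^ 2 + c2 * w ^ 4 + c3 * w ^ 6) <= (C - 1) * u).
  { unfold C. eapply Rle_trans; [apply Rabs_triang|].
    eapply Rle_trans; [apply Rplus_le_compat_r, Rabs_triang|]. rewrite !Rabs_mult.
    pose proof (Rabs_pos c1); pose proof (Rabs_pos c2); pose proof (Rabs_pos c3). nra. }
  assert (C * u <= 1 / 4).
  { apply Rle_trans with (C * / (4 * C)); [apply Rmult_le_compat_l; lra|]. right; field; lra. }
  apply Rabs_le_between in P. apply Rabs_le_between in Hc. nra.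
Qed.

(** ** The stabilizability equation in terms of profiles *)

(** With M = f_M(z) standing for M(1-z,1+z): the profile arguments of
    N(1-z, M) and N(M, 1+z) ... *)
Definition w_left (fM : R -> R) (z : R) : R := (fM z - (1 - z)) / ((1 - z) + fM z).
Definition w_right (fM : R -> R) (z : R) : R := ((1 + z) - fM z) / (fM z + (1 + z)).
(** ... the values N(1-z, M) and N(M, 1+z) ... *)
Definition N_left (fM fN : R -> R) (z : R) : R := ((1 - z) + fM z) / 2 * fN (w_left fM z).
Definition N_right (fM fN : R -> R) (z : R) : R := (fM z + (1 + z)) / 2 * fN (w_right fM z).
(** ... and the right-hand side K(N(1-z, M), N(M, 1+z)) of the equation. *)
Definition stab_rhs (fK fM fN : R -> R) (z : R) : R :=
  (N_left fM fN z + N_right fM fN z) / 2 *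
  fK ((N_right fM fN z - N_left fM fN z) / (N_left fM fN z + N_right fM fN z)).

(** The arguments w_left, w_right are O(z) since f_M(z) is within z of 1. *)
Lemma small_quotient p q z : 0 <= p <= 2 * z -> 1 <= q -> Rabs (p / q) <= 2 * z.
Proof.
  intros Hp Hq. rewrite Rabs_pos_eq by (apply Rdiv_le_0_compat; lra).
  apply Rle_trans with (p / 1); [|lra].
  apply Rmult_le_compat_l; [lra|]. apply Rinv_le_contravar; lra.
Qed.

Lemma stab_profile_equation K M N :
  profile_repr K -> profile_repr M -> profile_repr N ->
  (forall z, 0 <= z < 1 -> 1 - z <= profile M z <= 1 + z) ->
  (exists d, 0 < d /\ forall w, Rabs w < d -> 1 / 2 <= profile N w) ->
  stabilizable N K M ->
  near0 (fun z => profile N z = stab_rhs (profile K) (profile M) (profile N) z).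
Proof.
  intros RK RM RN HM [dN [HdN PN]] Hst.
  exists (Rmin (1/2) (dN/2)). split; [apply Rmin_pos; lra|].
  intros z Hz. pose proof (Rmin_l (1/2) (dN/2)); pose proof (Rmin_r (1/2) (dN/2)).
  destruct (HM z ltac:(lra)) as [G1 G2].
  pose proof (Hst (1 - z) (1 + z) ltac:(lra) ltac:(lra)) as E. fold (profile N z) (profile M z) in E.
  set (fM := profile M z) in *.
  assert (Hwl : Rabs (w_left (profile M) z) < dN)
    by (unfold w_left; fold fM; apply Rle_lt_trans with (2 * z); [apply small_quotient|]; lra).
  assert (Hwr : Rabs (w_right (profile M) z) < dN)
    by (unfold w_right; fold fM; apply Rle_lt_trans with (2 * z); [apply small_quotient|]; lra).
  assert (EL : N (1 - z) fM = N_left (profile M) (profile N) z).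
  { rewrite RN by lra. unfold N_left, w_left. fold fM.
    replace (fM + (1 - z)) with ((1 - z) + fM) by ring. reflexivity. }
  assert (ER : N fM (1 + z) = N_right (profile M) (profile N) z).
  { rewrite RN by lra. unfold N_right, w_right. fold fM.
    replace (1 + z + fM) with (fM + (1 + z)) by ring. reflexivity. }
  assert (HL : 0 < N_left (profile M) (profile N) z).
  { unfold N_left. fold fM. pose proof (PN _ Hwl). apply Rmult_lt_0_compat; lra. }
  assert (HR : 0 < N_right (profile M) (profile N) z).
  { unfold N_right. fold fM. pose proof (PN _ Hwr). apply Rmult_lt_0_compat; lra. }
  rewrite E, EL, ER, RK by lra. unfold stab_rhs.
  replace (N_right (profile M) (profile N) z + N_left (profile M) (profile N) z)
    with (N_left (profile M) (profile N) z + N_right (profile M) (profile N) z) by ring.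
  reflexivity.
Qed.

(** ** Expansion of the stabilizability equation to order 6 *)

(** Truncated series, computed once and for all, of the quantities entering
    [stab_rhs] when f_M, f_N, f_K have even expansions with coefficients
    (m1,m2,m3), (n1,n2,n3), (k1,k2,k3). *)
Definition ser_w_left (m1 m2 m3 : R) : list R :=
  [0; 1/2; 1/4 + 1/2*m1; 1/8; 1/16 + 1/2*m2 - 1/8*m1 - 1/4*m1^2;
   1/32 - 1/8*m1 - 1/8*m1^2; 1/64 + 1/2*m3 - 1/8*m2 - 3/32*m1 - 1/2*m1*m2 + 1/8*m1^3].

(** w_right(z) = - w_left(-z), since f_M is even. *)
Definition ser_w_right (m1 m2 m3 : R) : list R := pscal (-1) (pmirror (ser_w_left m1 m2 m3)).

Definition ser_fN_left (m1 m2 n1 n2 n3 : R) : list R :=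
  [1; 0; 1/4*n1; 1/4*n1 + 1/2*m1*n1; 1/16*n2 + 3/16*n1 + 1/4*m1*n1 + 1/4*m1^2*n1;
   1/8*n2 + 1/8*n1 + 1/2*m2*n1 + 1/4*m1*n2 - 1/4*m1^2*n1;
   1/64*n3 + 5/32*n2 + 5/64*n1 + 1/4*m2*n1 + 3/8*m1*n2 - 1/8*m1*n1 + 1/2*m1*m2*n1
     + 3/8*m1^2*n2 - 3/8*m1^2*n1 - 1/4*m1^3*n1].

Definition ser_fN_right (m1 m2 n1 n2 n3 : R) : list R := pmirror (ser_fN_left m1 m2 n1 n2 n3).

Definition ser_N_left (m1 m2 m3 n1 n2 n3 : R) : list R :=
  pmul (pmul (padd [1; -1] (peven m1 m2 m3)) [/ 2]) (ser_fN_left m1 m2 n1 n2 n3).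
Definition ser_N_right (m1 m2 m3 n1 n2 n3 : R) : list R :=
  pmul (pmul (padd (peven m1 m2 m3) [1; 1]) [/ 2]) (ser_fN_right m1 m2 n1 n2 n3).

(** The argument (N_right - N_left) / (N_left + N_right) of f_K. *)
Definition ser_ratio (m1 m2 n1 n2 : R) : list R :=
  [0; 1/2; 0; - 1/4*n1 - 1/4*m1 - 1/2*m1*n1; 0;
   - 1/8*n2 - 1/16*n1 + 1/16*n1^2 - 1/4*m2 - 1/2*m2*n1 - 1/4*m1*n2 + 1/8*m1*n1
     + 1/8*m1*n1^2 + 1/8*m1^2 + 1/4*m1^2*n1; 0].

Definition ser_fK_ratio (m1 m2 n1 n2 k1 k2 k3 : R) : list R :=
  [1; 0; 1/4*k1; 0; 1/16*k2 - 1/4*k1*n1 - 1/4*k1*m1 - 1/2*k1*m1*n1; 0;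
   1/64*k3 - 1/8*k2*n1 - 1/8*k2*m1 - 1/4*k2*m1*n1 - 1/8*k1*n2 - 1/16*k1*n1 + 1/8*k1*n1^2
     - 1/4*k1*m2 - 1/2*k1*m2*n1 - 1/4*k1*m1*n2 + 1/4*k1*m1*n1 + 3/8*k1*m1*n1^2
     + 3/16*k1*m1^2 + 1/2*k1*m1^2*n1 + 1/4*k1*m1^2*n1^2].

Definition ser_rhs (k1 k2 k3 m1 m2 m3 n1 n2 n3 : R) : list R :=
  pmul (pmul (padd (ser_N_left m1 m2 m3 n1 n2 n3) (ser_N_right m1 m2 m3 n1 n2 n3)) [/ 2])
       (ser_fK_ratio m1 m2 n1 n2 k1 k2 k3).

Lemma stab_rhs_series fK fM fN k1 k2 k3 m1 m2 m3 n1 n2 n3 :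
  even_expansion fK k1 k2 k3 -> even_expansion fM m1 m2 m3 -> even_expansion fN n1 n2 n3 ->
  agree6 (stab_rhs fK fM fN) (peval (ser_rhs k1 k2 k3 m1 m2 m3 n1 n2 n3)).
Proof.
  intros HK HM HN.
  pose proof (even_expansion_agree6 _ _ _ _ HM) as AM.
  assert (Alo : agree6 (fun z => 1 - z) (peval [1; -1])).
  { eapply agree6_congr; [|apply agree6_refl]. exists 1; split; [lra|]. intros; simpl; ring. }
  assert (Ahi : agree6 (fun z => 1 + z) (peval [1; 1])).
  { eapply agree6_congr; [|apply agree6_refl]. exists 1; split; [lra|]. intros; simpl; ring. }
  assert (AwL : agree6 (w_left fM) (peval (ser_w_left m1 m2 m3))).
  { apply (agree6_div _ _ _ _ _ (agree6_subP _ _ _ _ AM Alo) (agree6_addP _ _ _ _ Alo AM));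
      [cbn; lra|coeq6_tac]. }
  assert (AwR : agree6 (w_right fM) (peval (ser_w_right m1 m2 m3))).
  { apply (agree6_div _ _ _ _ _ (agree6_subP _ _ _ _ Ahi AM) (agree6_addP _ _ _ _ AM Ahi));
      [cbn; lra|coeq6_tac]. }
  assert (AfL : agree6 (fun z => fN (w_left fM z)) (peval (ser_fN_left m1 m2 n1 n2 n3)))
    by (apply (agree6_comp _ _ _ _ _ _ _ HN AwL); [cbn; ring|coeq6_tac]).
  assert (AfR : agree6 (fun z => fN (w_right fM z)) (peval (ser_fN_right m1 m2 n1 n2 n3)))
    by (apply (agree6_comp _ _ _ _ _ _ _ HN AwR); [cbn; ring|coeq6_tac]).
  pose proof (agree6_mulP _ _ _ _
    (agree6_mulP _ _ _ _ (agree6_addP _ _ _ _ Alo AM) (agree6_const (/ 2))) AfL) as AL.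
  pose proof (agree6_mulP _ _ _ _
    (agree6_mulP _ _ _ _ (agree6_addP _ _ _ _ AM Ahi) (agree6_const (/ 2))) AfR) as AR.
  fold (N_left fM fN) in AL. fold (N_right fM fN) in AR.
  assert (Ar : agree6 (fun z => (N_right fM fN z - N_left fM fN z) / (N_left fM fN z + N_right fM fN z))
                      (peval (ser_ratio m1 m2 n1 n2))).
  { apply (agree6_div _ _ _ _ _ (agree6_subP _ _ _ _ AR AL) (agree6_addP _ _ _ _ AL AR));
      [cbn; lra|coeq6_tac]. }
  assert (AKr : agree6 (fun z => fK ((N_right fM fN z - N_left fM fN z) /
                                     (N_left fM fN z + N_right fM fN z)))
                       (peval (ser_fK_ratio m1 m2 n1 n2 k1 k2 k3)))
    by (apply (agree6_comp _ _ _ _ _ _ _ HK Ar); [cbn; ring|coeq6_tac]).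
  exact (agree6_mulP _ _ _ _ (agree6_mulP _ _ _ _ (agree6_addP _ _ _ _ AL AR) (agree6_const (/ 2))) AKr).
Qed.

(** The coefficients of z^2, z^4, z^6 in the expansion of [stab_rhs] ... *)
Definition stab_coef2 (k1 m1 n1 : R) : R := 1/4*n1 + 1/2*m1 + 1/4*k1.
Definition stab_coef4 (k1 k2 m1 m2 n1 n2 : R) : R :=
  1/16*n2 + 1/16*n1 + 1/2*m2 + 1/8*m1*n1 + 1/4*m1^2*n1 + 1/16*k2 - 3/16*k1*n1
  - 1/8*k1*m1 - 1/2*k1*m1*n1.
Definition stab_coef6 (k1 k2 k3 m1 m2 m3 n1 n2 n3 : R) : R :=
  1/64*n3 + 3/32*n2 + 1/64*n1 + 1/2*m3 + 1/8*m2*n1 + 9/32*m1*n2 - 1/32*m1*n1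
  + 1/2*m1*m2*n1 + 3/8*m1^2*n2 - 1/8*m1^2*n1 - 1/8*m1^3*n1 + 1/64*k3 - 7/64*k2*n1
  - 3/32*k2*m1 - 1/4*k2*m1*n1 - 7/64*k1*n2 - 3/64*k1*n1 + 1/16*k1*n1^2 - 1/8*k1*m2
  - 1/2*k1*m2*n1 - 1/4*k1*m1*n2 + 3/32*k1*m1*n1 + 1/4*k1*m1*n1^2 + 1/16*k1*m1^2
  + 5/16*k1*m1^2*n1 + 1/4*k1*m1^2*n1^2.

(** ... must equal those of f_N, when N is (K,M)-stabilizable. *)
Definition stab_relations (k1 k2 k3 m1 m2 m3 n1 n2 n3 : R) : Prop :=
  n1 = stab_coef2 k1 m1 n1 /\ n2 = stab_coef4 k1 k2 m1 m2 n1 n2 /\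
  n3 = stab_coef6 k1 k2 k3 m1 m2 m3 n1 n2 n3.

Lemma stab_expansion fK fM fN k1 k2 k3 m1 m2 m3 n1 n2 n3 :
  even_expansion fK k1 k2 k3 -> even_expansion fM m1 m2 m3 -> even_expansion fN n1 n2 n3 ->
  near0 (fun z => fN z = stab_rhs fK fM fN z) ->
  stab_relations k1 k2 k3 m1 m2 m3 n1 n2 n3.
Proof.
  intros HK HM HN Heq.
  pose proof (agree6_coeffs _ _ (agree6_trans _ _ _ (agree6_sym _ _ (even_expansion_agree6 _ _ _ _ HN))
                (agree6_congr _ _ _ Heq (stab_rhs_series _ _ _ _ _ _ _ _ _ _ _ _ HK HM HN)))) as C.
  unfold stab_relations, stab_coef2, stab_coef4, stab_coef6. split; [|split].
  - transitivity (nth 2 (peven n1 n2 n3) 0); [reflexivity|]. rewrite (C 2%nat) by lia. cbn; field.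
  - transitivity (nth 4 (peven n1 n2 n3) 0); [reflexivity|]. rewrite (C 4%nat) by lia. cbn; field.
  - transitivity (nth 6 (peven n1 n2 n3) 0); [reflexivity|]. rewrite (C 6%nat) by lia. cbn; field.
Qed.

(** ** The Seiffert-type means P, T and NS *)

(** P, T and NS are [seiffert_type asin], [seiffert_type atan] and
    [seiffert_type arcsinh] (by definition). *)
Definition seiffert_type (g : R -> R) (s t : R) : R :=
  if Req_EM_T s t then s else (t - s) / (2 * g ((t - s) / (t + s))).

Lemma seiffert_profile g w : w <> 0 -> g w <> 0 -> profile (seiffert_type g) w = w / g w.
Proof.
  intros Hw Hg. unfold profile, seiffert_type.
  destruct (Req_EM_T (1 - w) (1 + w)) as [E|E]; [lra|].
  replace ((1 + w - (1 - w)) / (1 + w + (1 - w))) with w by (field; lra).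
  field; auto.
Qed.

Lemma seiffert_profile_0 g : profile (seiffert_type g) 0 = 1.
Proof. unfold profile, seiffert_type. destruct (Req_EM_T (1 - 0) (1 + 0)); lra. Qed.

Lemma seiffert_profile_repr g : (forall w, -1 < w < 1 -> w <> 0 -> g w <> 0) ->
  profile_repr (seiffert_type g).
Proof.
  intros Hg s t Hs Ht. pose proof (ratio_bounds s t Hs Ht) as Hw.
  destruct (Req_dec s t) as [E|E].
  - subst t. replace ((s - s) / (s + s)) with 0 by (field; lra).
    rewrite seiffert_profile_0. unfold seiffert_type.
    destruct (Req_EM_T s s); [field|contradiction].
  - assert (Hw0 : (t - s) / (t + s) <> 0).
    { intro Z. apply E. apply Rmult_eq_reg_r with (/ (t + s)); [|apply Rinv_neq_0_compat; lra].
      unfold Rdiv in Z. lra. }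
    pose proof (Hg _ Hw Hw0) as Hg0.
    rewrite seiffert_profile by auto. unfold seiffert_type.
    destruct (Req_EM_T s t) as [E'|_]; [contradiction|]. field; lra.
Qed.

Lemma seiffert_profile_even g :
  (forall w, g (- w) = - g w) -> (forall w, -1 < w < 1 -> w <> 0 -> g w <> 0) ->
  forall w, -1 < w < 1 -> profile (seiffert_type g) (- w) = profile (seiffert_type g) w.
Proof.
  intros Hodd Hg w Hw. destruct (Req_dec w 0) as [Z|Z]; [subst w; rewrite Ropp_0; reflexivity|].
  pose proof (Hg w Hw Z).
  rewrite !seiffert_profile, Hodd by (rewrite ?Hodd; auto; lra). field; auto.
Qed.

Lemma agree6_of_taylor g q1 q2 q3 C :
  (forall w, 0 < w < 1/2 -> Rabs (g w - w * peval (peven q1 q2 q3) w) <= C * w ^ 9) ->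
  agree6 (fun w => g w / w) (peval (peven q1 q2 q3)).
Proof.
  intros Hb eps He. set (q := peval (peven q1 q2 q3)) in *.
  assert (HC : 0 <= C).
  { pose proof (Hb (1/4) ltac:(lra)). pose proof (pow_lt (1/4) 9 ltac:(lra)).
    pose proof (Rabs_pos (g (1/4) - 1/4 * q (1/4))). destruct (Rle_dec 0 C); [auto|nra]. }
  generalize (near0_and _ _ (near0_lt (1/2) ltac:(lra))
                (near0_lt (eps / (C + 1)) ltac:(apply Rdiv_lt_0_compat; lra))).
  apply near0_mono. intros w Hw [Hw1 Hw2]. specialize (Hb w ltac:(lra)).
  replace (g w / w - q w) with ((g w - w * q w) / w) by (field; lra).
  unfold Rdiv. rewrite Rabs_mult, (Rabs_pos_eq (/ w)) by (left; apply Rinv_0_lt_compat; lra).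
  apply Rle_trans with (C * w ^ 9 * / w);
    [apply Rmult_le_compat_r; [left; apply Rinv_0_lt_compat; lra|exact Hb]|].
  replace (C * w ^ 9 * / w) with (C * (w * w) * w ^ 6) by (simpl; field; lra).
  pose proof (pow_le w 6 ltac:(lra)). apply Rmult_le_compat_r; auto.
  apply Rle_trans with (C * w); [apply Rmult_le_compat_l; nra|].
  apply Rle_trans with ((C + 1) * (eps / (C + 1))); [|right; field; lra].
  apply Rle_trans with ((C + 1) * w); [nra|]. apply Rmult_le_compat_l; lra.
Qed.

(** The expansion of the profile w / g(w) is obtained by inverting the series
    q of g(w)/w: T = 1/q up to degree 6. *)
Lemma seiffert_expansion g q1 q2 q3 T1 T2 T3 C :
  (forall w, g (- w) = - g w) -> (forall w, -1 < w < 1 -> w <> 0 -> g w <> 0) ->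
  (forall w, 0 < w < 1/2 -> Rabs (g w - w * peval (peven q1 q2 q3) w) <= C * w ^ 9) ->
  coeq6 (pmul (peven q1 q2 q3) (peven T1 T2 T3)) [1] ->
  even_expansion (profile (seiffert_type g)) T1 T2 T3.
Proof.
  intros Hodd Hg Hb Hc. apply even_expansion_of_agree6.
  - apply seiffert_profile_even; auto.
  - apply seiffert_profile_0.
  - refine (agree6_congr _ _ _ _
      (agree6_div _ _ _ _ _ (agree6_const 1) (agree6_of_taylor g q1 q2 q3 C Hb) ltac:(cbn; lra) Hc)).
    exists 1; split; [lra|]. intros z Hz. pose proof (Hg z ltac:(lra) ltac:(lra)).
    rewrite seiffert_profile by lra. field; lra.
Qed.

(** *** Taylor bounds for asin, atan, arcsinh *)

(** An odd Taylor bound of order 9 follows from an order-8 bound on derivatives,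
    by the mean value theorem. *)
Lemma odd_taylor_bound (g g' : R -> R) q1 q2 q3 C :
  g 0 = 0 -> (forall t, 0 <= t <= 1/2 -> derivable_pt_lim g t (g' t)) ->
  (forall t, 0 <= t <= 1/2 ->
     Rabs (g' t - (1 + 3 * q1 * t ^ 2 + 5 * q2 * t ^ 4 + 7 * q3 * t ^ 6)) <= C * t ^ 8) ->
  forall w, 0 < w < 1/2 -> Rabs (g w - w * peval (peven q1 q2 q3) w) <= C * w ^ 9.
Proof.
  intros g0 Dg Hb w Hw. set (p := fun t => t * peval (peven q1 q2 q3) t).
  assert (Dp : forall t, derivable_pt_lim p t (1 + 3 * q1 * t ^ 2 + 5 * q2 * t ^ 4 + 7 * q3 * t ^ 6)).
  { intros t. apply is_derive_Reals. unfold p, peven, peval. auto_derive; [auto|]. ring. }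
  destruct (MVT_cor2 (fun t => g t - p t)
              (fun t => g' t - (1 + 3 * q1 * t ^ 2 + 5 * q2 * t ^ 4 + 7 * q3 * t ^ 6)) 0 w ltac:(lra))
    as [c [Ec Hc]].
  { intros c Hc. apply derivable_pt_lim_minus; [apply Dg; lra|apply Dp]. }
  change (w * peval (peven q1 q2 q3) w) with (p w).
  replace (g w - p w) with ((g w - p w) - (g 0 - p 0)) by (unfold p; rewrite g0; simpl; ring).
  rewrite Ec, Rabs_mult, (Rabs_pos_eq (w - 0)) by lra.
  pose proof (Hb c ltac:(lra)) as Hbc.
  assert (c ^ 8 <= w ^ 8) by (apply pow_incr; lra).
  assert (HC : 0 <= C).
  { destruct (Rle_dec 0 C); auto. pose proof (pow_lt c 8 ltac:(lra)).
    pose proof (Rabs_pos (g' c - (1 + 3 * q1 * c ^ 2 + 5 * q2 * c ^ 4 + 7 * q3 * c ^ 6))). nra. }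
  replace (C * w ^ 9) with (C * w ^ 8 * (w - 0)) by (simpl; ring).
  apply Rmult_le_compat_r; [lra|]. eapply Rle_trans; [exact Hbc|]. apply Rmult_le_compat_l; auto.
Qed.

Lemma inv_approx_bound s p B : 0 < s -> 0 <= p -> 1/2 <= s * (1 + p * s) ->
  Rabs (1 - p * p * (s * s)) <= B / 2 -> Rabs (/ s - p) <= B.
Proof.
  intros Hs Hp HD H.
  assert (E : / s - p = (1 - p * p * (s * s)) / (s * (1 + p * s))) by (field; nra).
  rewrite E. unfold Rdiv. rewrite Rabs_mult, Rabs_inv, (Rabs_pos_eq (s * _)) by lra.
  pose proof (Rabs_pos (1 - p * p * (s * s))).
  apply Rle_trans with (B / 2 * / (1 / 2)).
  - apply Rmult_le_compat; auto; [left; apply Rinv_0_lt_compat; lra|apply Rinv_le_contravar; lra].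
  - right; field.
Qed.

Lemma taylor_atan w : 0 < w < 1/2 ->
  Rabs (atan w - w * peval (peven (-1/3) (1/5) (-1/7)) w) <= 1 * w ^ 9.
Proof.
  apply (odd_taylor_bound atan (fun t => / (1 + t ^ 2))).
  - apply atan_0.
  - intros t _. apply derivable_pt_lim_atan.
  - intros t Ht. pose proof (pow2_ge_0 t). assert (0 < 1 + t ^ 2) by lra.
    replace (/ (1 + t ^ 2) - (1 + 3 * (-1/3) * t ^ 2 + 5 * (1/5) * t ^ 4 + 7 * (-1/7) * t ^ 6))
      with (t ^ 8 * / (1 + t ^ 2)) by (field; lra).
    rewrite Rabs_mult, (Rabs_pos_eq (t ^ 8)) by (apply pow_le; lra).
    rewrite (Rabs_pos_eq (/ _)) by (left; apply Rinv_0_lt_compat; lra).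
    assert (/ (1 + t ^ 2) <= 1) by (rewrite <- Rinv_1; apply Rinv_le_contravar; lra).
    pose proof (pow_le t 8 ltac:(lra)). nra.
Qed.

Lemma even_powers_small t : 0 <= t ^ 2 <= 1/4 ->
  0 <= t ^ 4 <= 1/16 /\ 0 <= t ^ 6 <= 1/64 /\ 0 <= t ^ 8.
Proof.
  intros H. replace (t ^ 4) with (t ^ 2 * t ^ 2) by ring.
  replace (t ^ 6) with (t ^ 2 * t ^ 2 * t ^ 2) by ring.
  replace (t ^ 8) with (t ^ 2 * t ^ 2 * (t ^ 2 * t ^ 2)) by ring.
  assert (0 <= t ^ 2 * t ^ 2 <= 1/16) by (split; nra). split; [|split]; nra.
Qed.

Lemma taylor_asin w : 0 < w < 1/2 ->
  Rabs (asin w - w * peval (peven (1/6) (3/40) (5/112)) w) <= 2 * w ^ 9.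
Proof.
  apply (odd_taylor_bound asin (fun t => 1 / sqrt (1 - t²))).
  - apply asin_0.
  - intros t Ht. apply (derive_pt_eq_1 _ _ _ (derivable_pt_asin t ltac:(lra))), derive_pt_asin.
  - intros t Ht. unfold Rsqr, Rdiv. rewrite Rmult_1_l.
    assert (Hss : sqrt (1 - t * t) * sqrt (1 - t * t) = 1 - t * t) by (apply sqrt_sqrt; nra).
    pose proof (sqrt_pos (1 - t * t)).
    assert (Ht2 : 0 <= t ^ 2 <= 1/4) by (simpl; split; nra).
    apply inv_approx_bound; [nra|nra|nra|].
    rewrite Hss. match goal with |- Rabs ?e <= _ =>
      replace e with (t ^ 8 * (35/64 + 7/32 * t ^ 2 + 35/256 * t ^ 4 + 25/256 * t ^ 6)) by field end.
    destruct (even_powers_small t Ht2) as [H4 [H6 H8]].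
    rewrite Rabs_mult, !Rabs_pos_eq by lra. nra.
Qed.

Lemma taylor_arcsinh w : 0 < w < 1/2 ->
  Rabs (arcsinh w - w * peval (peven (-1/6) (3/40) (-5/112)) w) <= 2 * w ^ 9.
Proof.
  apply (odd_taylor_bound arcsinh (fun t => / sqrt (t ^ 2 + 1))).
  - apply arcsinh_0.
  - intros t _. apply derivable_pt_lim_arcsinh.
  - intros t Ht.
    assert (Ht2 : 0 <= t ^ 2 <= 1/4) by (simpl; split; nra).
    assert (Hss : sqrt (t ^ 2 + 1) * sqrt (t ^ 2 + 1) = t ^ 2 + 1) by (apply sqrt_sqrt; lra).
    assert (Hs : 1 <= sqrt (t ^ 2 + 1))
      by (apply Rle_trans with (sqrt 1); [rewrite sqrt_1; lra|apply sqrt_le_1_alt; lra]).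
    apply inv_approx_bound; [lra|nra|nra|].
    rewrite Hss. match goal with |- Rabs ?e <= _ =>
      replace e with (t ^ 8 * (35/64 - 7/32 * t ^ 2 + 35/256 * t ^ 4 - 25/256 * t ^ 6)) by field end.
    destruct (even_powers_small t Ht2) as [H4 [H6 H8]].
    rewrite Rabs_mult, (Rabs_pos_eq (t ^ 8)) by lra.
    assert (Rabs (35/64 - 7/32 * t ^ 2 + 35/256 * t ^ 4 - 25/256 * t ^ 6) <= 1)
      by (apply Rabs_le; lra).
    nra.
Qed.

Lemma arcsinh_opp x : arcsinh (- x) = - arcsinh x.
Proof.
  rewrite <- (sinh_arcsinh x) at 1.
  replace (- sinh (arcsinh x)) with (sinh (- arcsinh x))
    by (unfold sinh; rewrite Ropp_involutive; field).
  apply arcsinh_sinh.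
Qed.

Lemma asin_neq0 w : -1 < w < 1 -> w <> 0 -> asin w <> 0.
Proof. intros Hw Hn E. apply Hn. rewrite <- (sin_asin w) by lra. rewrite E, sin_0. reflexivity. Qed.

Lemma atan_neq0 w : -1 < w < 1 -> w <> 0 -> atan w <> 0.
Proof. intros _ Hn E. apply Hn. rewrite <- (tan_atan w), E, tan_0. reflexivity. Qed.

Lemma arcsinh_neq0 w : -1 < w < 1 -> w <> 0 -> arcsinh w <> 0.
Proof.
  intros _ Hn E. apply Hn. rewrite <- (sinh_arcsinh w), E. unfold sinh.
  rewrite Ropp_0, exp_0. field.
Qed.

(** The coefficients of 1/q for the Taylor series q of asin(w)/w, atan(w)/w,
    arcsinh(w)/w. *)
Lemma expansion_P : even_expansion (profile SeiffertP) (-1/6) (-17/360) (-367/15120).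
Proof.
  apply (seiffert_expansion asin (1/6) (3/40) (5/112) _ _ _ 2);
    [exact asin_opp|exact asin_neq0|exact taylor_asin|coeq6_tac].
Qed.

Lemma expansion_T : even_expansion (profile SeiffertT) (1/3) (-4/45) (44/945).
Proof.
  apply (seiffert_expansion atan (-1/3) (1/5) (-1/7) _ _ _ 1);
    [exact atan_opp|exact atan_neq0|exact taylor_atan|coeq6_tac].
Qed.

Lemma expansion_NS : even_expansion (profile NeumanSandor) (1/6) (-17/360) (367/15120).
Proof.
  apply (seiffert_expansion arcsinh (-1/6) (3/40) (-5/112) _ _ _ 2);
    [exact arcsinh_opp|exact arcsinh_neq0|exact taylor_arcsinh|coeq6_tac].
Qed.

(** ** The algebraic contradiction *)

(** For a stable mean the relations with k = m = n determine c2, c3 from c1. *)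
Definition stable_c2 (c1 : R) : R := 1/6*c1 - 1/2*c1^2 - 2/3*c1^3.
Definition stable_c3 (c1 : R) : R := 1/15*c1 - 5/18*c1^2 + 1/18*c1^3 + 10/9*c1^4 + 32/45*c1^5.

Lemma stable_coeffs c1 c2 c3 : stab_relations c1 c2 c3 c1 c2 c3 c1 c2 c3 ->
  c2 = stable_c2 c1 /\ c3 = stable_c3 c1.
Proof.
  unfold stab_relations, stab_coef4, stab_coef6. intros [_ [E4 E6]].
  assert (H2 : c2 = stable_c2 c1) by (unfold stable_c2; lra). subst c2.
  split; [reflexivity|]. unfold stable_c2, stable_c3 in *. lra.
Qed.

Definition incompatible (T1 T2 T3 : R) : Prop := forall k1 m1,
  ~ stab_relations k1 (stable_c2 k1) (stable_c3 k1) m1 (stable_c2 m1) (stable_c3 m1) T1 T2 T3.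

(** The z^2 relation forces k1 = 3 T1 - 2 m1; incompatibility of the two
    remaining polynomial equations in m1 is certified by a combination
    (z^6 relation) - (a0 + a1 m1 + a2 m1^2) (z^4 relation) equal to a nonzero
    constant. *)
Lemma incompatible_of_certificate T1 T2 T3 a0 a1 a2 c : c <> 0 ->
  (forall m1, let k1 := 3 * T1 - 2 * m1 in
     (stab_coef6 k1 (stable_c2 k1) (stable_c3 k1) m1 (stable_c2 m1) (stable_c3 m1) T1 T2 T3 - T3)
     - (a0 + a1 * m1 + a2 * m1 ^ 2)
       * (stab_coef4 k1 (stable_c2 k1) m1 (stable_c2 m1) T1 T2 - T2) = c) ->
  incompatible T1 T2 T3.
Proof.
  intros Hc Hcert k1 m1 [E2 [E4 E6]].
  assert (Hk : k1 = 3 * T1 - 2 * m1) by (unfold stab_coef2 in E2; lra). subst k1.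
  specialize (Hcert m1). cbv zeta in Hcert. rewrite <- E4, <- E6 in Hcert. lra.
Qed.

Lemma incompatible_P : incompatible (-1/6) (-17/360) (-367/15120).
Proof.
  apply (incompatible_of_certificate _ _ _ (41/60) (-2/3) (-4/3) (-1/1152)); [lra|].
  intros m1; unfold stab_coef4, stab_coef6, stable_c2, stable_c3; field.
Qed.

Lemma incompatible_T : incompatible (1/3) (-4/45) (44/945).
Proof.
  apply (incompatible_of_certificate _ _ _ (-109/150) (1/3) (-4/3) (-1/1800)); [lra|].
  intros m1; unfold stab_coef4, stab_coef6, stable_c2, stable_c3; field.
Qed.

Lemma incompatible_NS : incompatible (1/6) (-17/360) (367/15120).
Proof.
  apply (incompatible_of_certificate _ _ _ (-3/40) 0 (-4/3) (-79/3840)); [lra|].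
  intros m1; unfold stab_coef4, stab_coef6, stable_c2, stable_c3; field.
Qed.

Lemma stabilizable_relations N K M n1 n2 n3 :
  profile_repr N -> even_expansion (profile N) n1 n2 n3 ->
  good_mean K -> good_mean M -> stabilizable N K M ->
  exists k1 k2 k3 m1 m2 m3,
    stab_relations k1 k2 k3 k1 k2 k3 k1 k2 k3 /\ stab_relations m1 m2 m3 m1 m2 m3 m1 m2 m3 /\
    stab_relations k1 k2 k3 m1 m2 m3 n1 n2 n3.
Proof.
  intros RN EN GK GM Hst.
  destruct (good_mean_profile K GK) as [RK [BK [SK [k1 [k2 [k3 EK]]]]]].
  destruct (good_mean_profile M GM) as [RM [BM [SM [m1 [m2 [m3 EM]]]]]].
  exists k1, k2, k3, m1, m2, m3. split; [|split].
  - exact (stab_expansion _ _ _ _ _ _ _ _ _ _ _ _ EK EK EK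
      (stab_profile_equation K K K RK RK RK BK (even_expansion_lower _ _ _ _ EK) SK)).
  - exact (stab_expansion _ _ _ _ _ _ _ _ _ _ _ _ EM EM EM
      (stab_profile_equation M M M RM RM RM BM (even_expansion_lower _ _ _ _ EM) SM)).
  - exact (stab_expansion _ _ _ _ _ _ _ _ _ _ _ _ EK EM EN
      (stab_profile_equation K M N RK RM RN BM (even_expansion_lower _ _ _ _ EN) Hst)).
Qed.

Lemma not_stabilizable N T1 T2 T3 :
  profile_repr N -> even_expansion (profile N) T1 T2 T3 -> incompatible T1 T2 T3 ->
  ~ exists K M : R -> R -> R, good_mean K /\ good_mean M /\ stabilizable N K M.
Proof.
  intros RN EN Hinc [K [M [GK [GM Hst]]]].
  destruct (stabilizable_relations N K M T1 T2 T3 RN EN GK GM Hst)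
    as [k1 [k2 [k3 [m1 [m2 [m3 [SK [SM SN]]]]]]]].
  destruct (stable_coeffs _ _ _ SK) as [-> ->].
  destruct (stable_coeffs _ _ _ SM) as [-> ->].
  exact (Hinc k1 m1 SN).
Qed.

Theorem mainTheorem16 :
  (~ exists K M : R -> R -> R, good_mean K /\ good_mean M /\ stabilizable SeiffertP K M) /\
  (~ exists K M : R -> R -> R, good_mean K /\ good_mean M /\ stabilizable SeiffertT K M) /\
  (~ exists K M : R -> R -> R, good_mean K /\ good_mean M /\ stabilizable NeumanSandor K M).
Proof.
  split; [|split].
  - exact (not_stabilizable _ _ _ _ (seiffert_profile_repr asin asin_neq0) expansion_P incompatible_P).
  - exact (not_stabilizable _ _ _ _ (seiffert_profile_repr atan atan_neq0) expansion_T incompatible_T).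
  - exact (not_stabilizable _ _ _ _ (seiffert_profile_repr arcsinh arcsinh_neq0)
             expansion_NS incompatible_NS).
Qed.
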